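(* Let $\mathcal{R}=(\mathcal{S},R_1,\ldots,R_k)$ be a relational structure (all arities $n_i\ge2$) with a relational message passing model as in the context satisfying the Bounded Jacobians assumption, and let $\mathcal{G}=\mathcal{G}(\mathcal{S},\mathbf{B})$ be its influence graph for the augmented influence matrix $\mathbf{B}$. Then for all $\sigma,\tau\in\mathcal{S}$ such that $(\tau\to\sigma)$ is an edge of $\mathcal{G}$, $$\left\Vert \frac{\partial \mathbf{h}_{\sigma}^{(2)}}{\partial \mathbf{h}^{(0)}_{\tau}} \right\Vert_{1} \leq \frac{1}{3} \left( \prod_{\ell=0}^{1} \alpha^{(\ell)} \beta^{(\ell)} \right) \left[ \mathrm{EFC}_\mathcal{G}(\tau, \sigma) + w_{\tau}^{\mathrm{out}} + w_{\sigma}^{\mathrm{in}} - 4 \right].$$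
   Context: A relational structure $\mathcal{R}=(\mathcal{S},R_1,\ldots,R_k)$ consists of a finite set $\mathcal{S}$ of entities and relations $R_i\subseteq\mathcal{S}^{n_i}$ of arity $n_i$; throughout, $n_i\ge 2$ for all $i$. A relational message passing model on $\mathcal{R}$ consists of: feature vectors $\mathbf{h}_\sigma^{(t)}\in\mathbb{R}^{p_t}$ for $\sigma\in\mathcal{S}$, $t\ge 0$, with $\mathbf{h}_\sigma^{(0)}=\mathbf{x}_\sigma$ the input features (all later features are regarded as functions of the input features); message functions $\boldsymbol{\psi}_i^{(t)}:(\mathbb{R}^{p_t})^{n_i}\to\mathbb{R}^{p_{i,t}}$; update functions $\boldsymbol{\phi}^{(t)}:\mathbb{R}^{p_{1,t}}\times\cdots\times\mathbb{R}^{p_{k,t}}\to\mathbb{R}^{p_{t+1}}$; and shift operators $\mathbf{A}^{R_i}\in\mathbb{R}_{\ge 0}^{\mathcal{S}^{n_i}}$ with $\mathbf{A}^{R_i}_{\zeta_1,\ldots,\zeta_{n_i}}=0$ whenever $(\zeta_1,\ldots,\zeta_{n_i})\notin R_i$. The update rule is $\mathbf{h}_\sigma^{(t+1)}=\boldsymbol{\phi}^{(t)}(\mathbf{m}_{\sigma,1}^{(t)},\ldots,\mathbf{m}_{\sigma,k}^{(t)})$ with $\mathbf{m}_{\sigma,i}^{(t)}=\sum_{\boldsymbol{\xi}\in\mathcal{S}^{n_i-1}}\mathbf{A}^{R_i}_{\sigma,\boldsymbol{\xi}}\,\boldsymbol{\psi}_i^{(t)}(\mathbf{h}_\sigma^{(t)},\mathbf{h}_{\xi_1}^{(t)},\ldots,\mathbf{h}_{\xi_{n_i-1}}^{(t)})$.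 Aggregated influence matrix: $\tilde{\mathbf{A}}^{R_i}_{\sigma,\tau}=\sum_{j=1}^{n_i-1}\sum_{\boldsymbol{\xi}\in\mathcal{S}^{n_i-2}}\mathbf{A}^{R_i}_{\sigma,\xi_1,\ldots,\xi_{j-1},\tau,\xi_j,\ldots,\xi_{n_i-2}}$, $\tilde{\mathbf{A}}=\sum_{i=1}^k\tilde{\mathbf{A}}^{R_i}$; $\gamma=\max_{\sigma}\sum_{\tau}\tilde{\mathbf{A}}_{\sigma,\tau}$; augmented influence matrix $\mathbf{B}=\gamma\mathbf{I}+\tilde{\mathbf{A}}$. Influence graph: for $\mathbf{Q}\in\{\tilde{\mathbf{A}},\mathbf{B}\}$, $\mathcal{G}(\mathcal{S},\mathbf{Q})$ is the weighted directed graph on node set $\mathcal{S}$ with a directed edge $\tau\to\sigma$ (self-loops allowed) for each $(\sigma,\tau)$ with $\mathbf{Q}_{\sigma,\tau}>0$, of weight $w_{\tau\to\sigma}=\mathbf{Q}_{\sigma,\tau}$; set $w_{\tau\to\sigma}=0$ if there is no such edge. Extended Forman curvature: in a weighted directed graph with weights $w$, $w_\tau^{\mathrm{out}}=\sum_{\sigma}w_{\tau\to\sigma}$, $w_\sigma^{\mathrm{in}}=\sum_{\tau}w_{\tau\to\sigma}$; for an edge $\tau\to\sigma$, $w_T=\sum_{\xi\in\mathcal{S}}w_{\tau\to\xi}w_{\xi\to\sigma}$, $w_F=\sum_{\xi_1,\xi_2\in\mathcal{S}}w_{\tau\to\xi_1}w_{\xi_1\to\xi_2}w_{\xi_2\to\sigma}$,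 and $\mathrm{EFC}_{\mathcal{G}}(\tau,\sigma)=4-w_\tau^{\mathrm{out}}-w_\sigma^{\mathrm{in}}+3w_T+2w_F$. Bounded Jacobians assumption: every $\boldsymbol{\psi}_i^{(\ell)}$ and $\boldsymbol{\phi}^{(\ell)}$ is differentiable, the Jacobian of $\boldsymbol{\psi}_i^{(\ell)}$ with respect to any one of its vector arguments has induced $1$-norm at most $\beta_i^{(\ell)}$ everywhere, and the Jacobian of $\boldsymbol{\phi}^{(\ell)}$ with respect to any one message argument has induced $1$-norm at most $\alpha^{(\ell)}$ everywhere; $\beta^{(\ell)}=\max_i\beta_i^{(\ell)}$. $\|\cdot\|_1$ is the induced matrix $1$-norm (maximum absolute column sum). *)

From HB Require Import structures.
From mathcomp Require Import all_boot all_order all_algebra.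
From mathcomp Require Import all_classical all_reals all_analysis.
Set Implicit Arguments. Unset Strict Implicit. Unset Printing Implicit Defensive.
Import Order.TTheory GRing.Theory Num.Theory.
Import numFieldNormedType.Exports.
Local Open Scope ring_scope.

Section RMP.
Variable R : realType.

(* Jacobian in the standard orientation (rows = output coordinates,
   columns = input coordinates): transpose of MathComp-Analysis' 'J. *)
Definition jac (m n : nat) (f : 'rV[R]_m -> 'rV[R]_n) (p : 'rV[R]_m)
  : 'M[R]_(n, m) := ('J f p)^T.

Definition norm1 (m n : nat) (M : 'M[R]_(m, n)) : R :=
  \big[Num.max/0]_(j < n) \sum_(i < m) `|M i j|.

Variables (S : finType) (k : nat) (n : 'I_k -> nat).

Definition first_is (i : 'I_k) (z : {ffun 'I_(n i) -> S}) (s : S) : bool :=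
  [forall j : 'I_(n i), (nat_of_ord j == 0%N) ==> (z j == s)].

Definition args (d : nat) (i : 'I_k) (h : S -> 'rV[R]_d)
  (z : {ffun 'I_(n i) -> S}) : 'M[R]_(n i, d) :=
  \matrix_(a < n i, b < d) h (z a) 0 b.

(* Model data: feature dims p t, message dims q t i, message functions
   psi t i, update functions phi t (taking the k messages as one block row
   [m_1 | ... | m_k]), shift operators A i. *)
Variables (A : forall i : 'I_k, {ffun 'I_(n i) -> S} -> R)
  (p : nat -> nat) (q : nat -> 'I_k -> nat)
  (psi : forall (t : nat) (i : 'I_k), 'M[R]_(n i, p t) -> 'rV[R]_(q t i))
  (phi : forall t : nat, 'rV[R]_(\sum_(i < k) q t i) -> 'rV[R]_(p t.+1)).

Definition message (t : nat) (h : S -> 'rV[R]_(p t)) (s : S) (i : 'I_k)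
  : 'rV[R]_(q t i) :=
  \sum_(z : {ffun 'I_(n i) -> S} | first_is z s) @A i z *: @psi t i (args h z).

(* h^{(t)} as a function of the input features x *)
Fixpoint feat (t : nat) : (S -> 'rV[R]_(p 0)) -> S -> 'rV[R]_(p t) :=
  match t return (S -> 'rV[R]_(p 0)) -> S -> 'rV[R]_(p t) with
  | 0 => fun x => x
  | t'.+1 => fun x s => @phi t' (\mxrow_(i < k) message (feat t' x) s i)
  end.

End RMP.

Section Influence.
Variables (R : realType) (S : finType) (k : nat) (n : 'I_k -> nat)
  (A : forall i : 'I_k, {ffun 'I_(n i) -> S} -> R).

Definition Atilde (s u : S) : R :=
  \sum_(i < k) \sum_(j < n i | (0 < j)%N)
     \sum_(z : {ffun 'I_(n i) -> S} | first_is z s && (z j == u)) A z.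

Definition gamma : R := \big[Num.max/0]_(s : S) \sum_(u : S) Atilde s u.

Definition Bmat (s u : S) : R := (s == u)%:R * gamma + Atilde s u.

End Influence.

Section Forman.
Variables (R : realType) (S : finType).

Definition is_edge (Q : S -> S -> R) (u s : S) : bool := 0 < Q s u.
Definition weight (Q : S -> S -> R) (u s : S) : R :=
  if 0 < Q s u then Q s u else 0.

Variable w : S -> S -> R.   (* w u s = w_{u -> s} *)
Definition w_out (u : S) : R := \sum_(s : S) w u s.
Definition w_in (s : S) : R := \sum_(u : S) w u s.
Definition w_T (u s : S) : R := \sum_(x : S) w u x * w x s.
Definition w_F (u s : S) : R := \sum_(x1 : S) \sum_(x2 : S) w u x1 * w x1 x2 * w x2 s.
Definition EFC (u s : S) : R := 4 - w_out u - w_in s + 3 * w_T u s + 2 * w_F u s.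

End Forman.

(* Derivatives are measured in the entrywise l1 norm, whose induced norm on
   row-vector maps is the maximal absolute column sum [norm1].  Summing the
   partial Jacobians, one message-passing layer turns an l1 sensitivity bound
   [c] of the features into [alpha * beta * B c]: the message sent to [s]
   depends on [s] itself, with total weight at most [gamma] (the diagonal of
   B), and on the other members of its relation tuples, with weights A~.  Two
   layers starting from the indicator of [tau] give the bound
   [alpha0 beta0 alpha1 beta1 (B^2)_(sigma, tau)], and
   [(B^2)_(sigma, tau) = w_T(tau, sigma)] is at most a third of
   [EFC + w_out + w_in - 4 = 3 w_T + 2 w_F]. *)

From HB Require Import structures.
From mathcomp Require Import all_boot all_order all_algebra.
From mathcomp Require Import all_classical all_reals all_analysis.
From mathcomp Require Import ring.
Import Order.TTheory GRing.Theory Num.Theory.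
Import numFieldNormedType.Exports.
Local Open Scope ring_scope.

Set Implicit Arguments. Unset Strict Implicit. Unset Printing Implicit Defensive.

Section MatrixCalculus.
Variable R : realType.

Lemma continuous_linear_mx a b c d (f : {linear 'M[R]_(a, b) -> 'M[R]_(c, d)}) :
  continuous f.
Proof.
have -> : f = \sum_i \sum_j (fun M : 'M[R]_(a, b) => M i j *: f (delta_mx i j)) :> (_ -> _).
  apply: funext => M; rewrite [in LHS](matrix_sum_delta M) linear_sum.
  rewrite fct_sumE; apply: eq_bigr => i _; rewrite linear_sum fct_sumE.
  by apply: eq_bigr => j _; rewrite linearZ.
move=> M; elim/big_ind: _ => [|g h|i _]; [exact: (@cst_continuous _ _ (0 : 'M[R]_(c, d)) M)
  | exact: continuousD|].
elim/big_ind: _ => [|g h|j _]; [exact: (@cst_continuous _ _ (0 : 'M[R]_(c, d)) M)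
  | exact: continuousD|].
exact/continuousZr_tmp/coord_continuous.
Qed.

Lemma linear_mx_diff a b c d (f : 'M[R]_(a, b) -> 'M[R]_(c, d)) x :
  linear f -> differentiable f x /\ 'd f x = f :> (_ -> _).
Proof.
move=> f_lin; pose fL : {linear _ -> _} := HB.pack f (GRing.isLinear.Build _ _ _ _ f f_lin).
have f_cont : continuous fL := @continuous_linear_mx _ _ _ _ fL.
by split; [exact: (linear_differentiable x f_cont) | exact: (diff_lin x f_cont)].
Qed.

Lemma diff_big (V W : normedModType R) (I : Type) (r : seq I) (P : pred I)
    (F : I -> V -> W) x :
  (forall i, P i -> differentiable (F i) x) ->
  differentiable (fun u => \sum_(i <- r | P i) F i u) x /\
  forall v, 'd (fun u => \sum_(i <- r | P i) F i u) x v = \sum_(i <- r | P i) 'd (F i) x v.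
Proof.
move=> dF; rewrite -fct_sumE.
suff [dsum dsumE] : differentiable (\sum_(i <- r | P i) F i) x /\
    'd (\sum_(i <- r | P i) F i) x = \sum_(i <- r | P i) ('d (F i) x : V -> W) :> (V -> W).
  by split => // v; rewrite dsumE fct_sumE.
elim/big_rec2: _ => [|i g dg Pi [dg_x <-]].
  by split; [exact: (differentiable_cst (0 : W)) | exact: (diff_cst (0 : W) x)].
by split; [exact: differentiableD (dF i Pi) dg_x | exact: diffD (dF i Pi) dg_x].
Qed.

Lemma diff_linear_comp a b c d (L : 'M[R]_(a, b) -> 'M[R]_(c, d))
    (V : normedModType R) (G : V -> 'M[R]_(a, b)) x :
  linear L -> differentiable G x ->
  differentiable (L \o G) x /\ forall v, 'd (L \o G) x v = L ('d G x v).
Proof.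
move=> L_lin dG; have [dL dLE] := linear_mx_diff (G x) L_lin.
split=> [|v]; first exact: differentiable_comp.
by rewrite diff_comp // dLE.
Qed.

End MatrixCalculus.

Section EntrywiseNorm.
Variable R : realType.

Definition mxnorm_l1 a b (M : 'M[R]_(a, b)) : R := \sum_i \sum_j `|M i j|.

Lemma mxnorm_l1_ge0 a b (M : 'M[R]_(a, b)) : 0 <= mxnorm_l1 M.
Proof. by apply: sumr_ge0 => i _; apply: sumr_ge0. Qed.

Lemma mxnorm_l1D a b (M N : 'M[R]_(a, b)) :
  mxnorm_l1 (M + N) <= mxnorm_l1 M + mxnorm_l1 N.
Proof.
rewrite /mxnorm_l1 -big_split ler_sum // => i _; rewrite -big_split ler_sum // => j _.
by rewrite mxE ler_normD.
Qed.

Lemma mxnorm_l1Z a b (s : R) (M : 'M[R]_(a, b)) :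
  mxnorm_l1 (s *: M) = `|s| * mxnorm_l1 M.
Proof.
rewrite /mxnorm_l1 mulr_sumr; apply: eq_bigr => i _; rewrite mulr_sumr.
by apply: eq_bigr => j _; rewrite mxE normrM.
Qed.

Lemma mxnorm_l1_sum a b (I : Type) (r : seq I) (P : pred I) (F : I -> 'M[R]_(a, b)) :
  mxnorm_l1 (\sum_(i <- r | P i) F i) <= \sum_(i <- r | P i) mxnorm_l1 (F i).
Proof.
elim/big_rec2: _ => [|i y M _ le_yM]; last first.
  by apply: le_trans (mxnorm_l1D _ _) _; rewrite lerD2l.
by rewrite /mxnorm_l1 big1 // => i _; rewrite big1 // => j _; rewrite mxE normr0.
Qed.

Lemma mxnorm_l1_rows a b (M : 'M[R]_(a, b)) :
  mxnorm_l1 M = \sum_i mxnorm_l1 (row i M).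
Proof.
apply: eq_bigr => i _; rewrite /mxnorm_l1 big_ord1.
by apply: eq_bigr => j _; rewrite mxE.
Qed.

Lemma mxnorm_l1_delta m (j : 'I_m) : mxnorm_l1 (delta_mx 0 j : 'rV[R]_m) = 1.
Proof.
rewrite /mxnorm_l1 big_ord1 (bigD1 j) //= big1 => [|i /negbTE nij]; rewrite mxE.
  by rewrite !eqxx normr1 addr0.
by rewrite nij andbF normr0.
Qed.

Lemma norm1_ge0 m n (M : 'M[R]_(m, n)) : 0 <= norm1 M.
Proof. exact: bigmax_ge_id. Qed.

Lemma jacE m n (f : 'rV[R]_m -> 'rV[R]_n) x i j :
  jac f x i j = 'd f x (delta_mx 0 j) 0 i.
Proof. by rewrite !mxE. Qed.

Lemma norm1_jacE m n (f : 'rV[R]_m -> 'rV[R]_n) x :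
  norm1 (jac f x) = \big[Num.max/0]_j mxnorm_l1 ('d f x (delta_mx 0 j)).
Proof.
apply: eq_bigr => j _; rewrite /mxnorm_l1 big_ord1.
by apply: eq_bigr => i _; rewrite jacE.
Qed.

Lemma mxnorm_l1_diff_le m n (f : 'rV[R]_m -> 'rV[R]_n) x v :
  mxnorm_l1 ('d f x v) <= norm1 (jac f x) * mxnorm_l1 v.
Proof.
rewrite [in X in 'd f x X](row_sum_delta v) linear_sum.
apply: le_trans (mxnorm_l1_sum _ _ _) _.
rewrite /mxnorm_l1 big_ord1 mulr_sumr ler_sum // => j _.
rewrite linearZ -/(mxnorm_l1 _) mxnorm_l1Z mulrC ler_wpM2r //.
by rewrite norm1_jacE; apply: le_bigmax.
Qed.

Lemma norm1_jac_le m n (f : 'rV[R]_m -> 'rV[R]_n) x C : 0 <= C ->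
  (forall v, mxnorm_l1 ('d f x v) <= C * mxnorm_l1 v) -> norm1 (jac f x) <= C.
Proof.
move=> C_ge0 df_le; rewrite norm1_jacE; apply: bigmax_le => // j _.
by have := df_le (delta_mx 0 j); rewrite mxnorm_l1_delta mulr1.
Qed.

End EntrywiseNorm.

Section PartialDerivatives.
Variable R : realType.

Lemma diff_affine_mx a b c d (L : 'M[R]_(a, b) -> 'M[R]_(c, d)) y x :
  linear L -> differentiable (cst y + L) x /\ 'd (cst y + L) x = L :> (_ -> _).
Proof.
move=> L_lin; have [dL dLE] := linear_mx_diff x L_lin.
have dy := differentiable_cst y x.
split; first exact: differentiableD dy dL.
rewrite diffD //; apply: funext => u /=.
have dyE : 'd (cst y) x u = 0 by rewrite diff_cst.
have dLu : 'd L x u = L u by rewrite dLE.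
exact: etrans (congr2 +%R dyE dLu) (add0r _).
Qed.

(* The derivative along [v] is the sum of the partial derivatives along the
   [E j (P j v)]. *)
Lemma mxnorm_l1_diff_le_partials N (d : 'I_N -> nat) a b e
    (f : 'M[R]_(a, b) -> 'rV[R]_e) x
    (E : forall j, 'rV[R]_(d j) -> 'M[R]_(a, b))
    (P : forall j, 'M[R]_(a, b) -> 'rV[R]_(d j)) (C : R) :
  (forall j, linear (E j)) -> (forall v, \sum_j E j (P j v) = v) ->
  differentiable f x ->
  (forall j, norm1 (jac (fun u => f (x + E j (u - P j x))) (P j x)) <= C) ->
  forall v, mxnorm_l1 ('d f x v) <= C * \sum_j mxnorm_l1 (P j v).
Proof.
move=> E_lin sumEP df le_C v.
have partialE j w : 'd (fun u => f (x + E j (u - P j x))) (P j x) w = 'd f x (E j w).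
  have [dg dgE] := diff_affine_mx (x - E j (P j x)) (P j x) (E_lin j).
  have -> : (fun u => f (x + E j (u - P j x))) = f \o (cst (x - E j (P j x)) + E j).
    pose EL : {linear _ -> _} := HB.pack (E j) (GRing.isLinear.Build _ _ _ _ _ (E_lin j)).
    apply: funext => u /=; rewrite -[E j (u - _)]/(EL (u - _)) linearB /=.
    by rewrite [EL u - _]addrC addrA.
  have dgw : 'd (cst (x - E j (P j x)) + E j) (P j x) w = E j w by rewrite dgE.
  have gPx : (cst (x - E j (P j x)) + E j) (P j x) = x := subrK _ _.
  rewrite diff_comp //=; first by rewrite dgw gPx.
  by rewrite gPx.
apply: (@le_trans _ _ (mxnorm_l1 (\sum_j 'd f x (E j (P j v))))).
  by rewrite -linear_sum sumEP.
apply: le_trans (mxnorm_l1_sum _ _ _) _; rewrite mulr_sumr ler_sum // => j _.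
rewrite -partialE; apply: le_trans (mxnorm_l1_diff_le _ _ _) _.
by rewrite ler_wpM2r ?mxnorm_l1_ge0 ?le_C.
Qed.

Lemma mulmx_linear m n r (M : 'M[R]_(m, n)) : linear (@mulmx R m n r M).
Proof. by move=> s u v; rewrite mulmxDr scalemxAr. Qed.

Lemma scalemx_linear m n (s : R) : linear (fun M : 'M[R]_(m, n) => s *: M).
Proof. by move=> a u v; rewrite scalerDr !scalerA mulrC. Qed.

Lemma mul_delta_mx_rowE N d (j : 'I_N) (u : 'rV[R]_d) a b :
  (delta_mx j 0 *m u) a b = (a == j)%:R * u 0 b.
Proof. by rewrite !mxE big_ord1 !mxE eqxx andbT. Qed.

Lemma row_sum_delta_mul N d (X : 'I_N -> 'rV[R]_d) a :
  row a (\sum_j delta_mx j 0 *m X j) = X a.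
Proof.
apply/rowP => b; rewrite mxE summxE (bigD1 a) //= mul_delta_mx_rowE eqxx mul1r.
by rewrite big1 ?addr0 // => j /negbTE nja; rewrite mul_delta_mx_rowE eq_sym nja mul0r.
Qed.

Lemma sum_delta_mul_row N d (M : 'M[R]_(N, d)) : \sum_j delta_mx j 0 *m row j M = M.
Proof. by apply/row_matrixP => a; rewrite row_sum_delta_mul. Qed.

Lemma row_updateE N d (X : 'M[R]_(N, d)) j (u : 'rV[R]_d) :
  \matrix_(a, b) (if a == j then u 0 b else X a b) = X + delta_mx j 0 *m (u - row j X).
Proof.
apply/matrixP => a b; rewrite [LHS]mxE [RHS]mxE mul_delta_mx_rowE !mxE.
by case: eqP => [->|_]; rewrite ?mul1r ?mul0r ?addr0 // addrC subrK.
Qed.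

Lemma mxnorm_l1_diff_le_rows N d e (f : 'M[R]_(N, d) -> 'rV[R]_e) X C :
  differentiable f X ->
  (forall j : 'I_N, norm1 (jac (fun u : 'rV[R]_d =>
      f (\matrix_(a, b) if a == j then u 0 b else X a b)) (row j X)) <= C) ->
  forall V, mxnorm_l1 ('d f X V) <= C * mxnorm_l1 V.
Proof.
move=> df le_C V; rewrite [mxnorm_l1 V]mxnorm_l1_rows.
apply: (@mxnorm_l1_diff_le_partials N (fun=> d) _ _ _ _ _
  (fun j => mulmx (delta_mx j 0)) (fun j => row j)).
- by move=> j; exact: mulmx_linear.
- exact: sum_delta_mul_row.
- exact: df.
by move=> j; have := le_C j; under eq_fun do rewrite row_updateE.
Qed.

End PartialDerivatives.

Section Blocks.
Variables (R : realType) (k : nat) (q : 'I_k -> nat).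

Definition block_inj (i : 'I_k) (u : 'rV[R]_(q i)) : 'rV[R]_(\sum_i q i) :=
  \mxrow_j @dfwith _ (fun j => 'rV[R]_(q j)) (fun j => 0) i u j.

Lemma submxrow_block_inj i u : submxrow (block_inj u) i = u.
Proof. by rewrite /block_inj mxrowK dfwithin. Qed.

Lemma submxrow_block_inj_out i j u : i != j -> submxrow (@block_inj i u) j = 0.
Proof. by move=> nij; rewrite /block_inj mxrowK dfwithout. Qed.

Lemma submxrow_sum_block_inj (B : forall i, 'rV[R]_(q i)) i :
  submxrow (\sum_j block_inj (B j)) i = B i.
Proof.
rewrite submxrow_sum (bigD1 i) //= submxrow_block_inj big1 ?addr0 // => j nji.
by rewrite submxrow_block_inj_out.
Qed.

Lemma sum_block_inj_submxrow (w : 'rV[R]_(\sum_i q i)) :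
  \sum_i block_inj (submxrow w i) = w.
Proof. by apply/mxrowP => j; rewrite submxrow_sum_block_inj. Qed.

Lemma block_inj_linear i : linear (@block_inj i).
Proof.
move=> s u v; apply/mxrowP => j; rewrite submxrowD.
have -> : submxrow (s *: block_inj u) j = s *: submxrow (block_inj u) j.
  by apply/matrixP => a b; rewrite !mxE.
have [<-|nij] := eqVneq i j; first by rewrite !submxrow_block_inj.
by rewrite !submxrow_block_inj_out // scaler0 addr0.
Qed.

Lemma mxrow_dfwithE m i (u : 'rV[R]_(q i)) :
  \mxrow_j @dfwith _ (fun j => 'rV[R]_(q j)) (fun j => submxrow m j) i u j
  = m + block_inj (u - submxrow m i).
Proof.
apply/mxrowP => j; rewrite submxrowD mxrowK.
have [<-|nij] := eqVneq i j; first by rewrite dfwithin submxrow_block_inj addrC subrK.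
by rewrite dfwithout // submxrow_block_inj_out // addr0.
Qed.

Lemma mxnorm_l1_diff_le_blocks e (f : 'rV[R]_(\sum_i q i) -> 'rV[R]_e) m C :
  differentiable f m ->
  (forall i, norm1 (jac (fun u : 'rV[R]_(q i) =>
      f (\mxrow_j @dfwith _ (fun j => 'rV[R]_(q j)) (fun j => submxrow m j) i u j))
      (submxrow m i)) <= C) ->
  forall w, mxnorm_l1 ('d f m w) <= C * \sum_i mxnorm_l1 (submxrow w i).
Proof.
move=> df le_C.
apply: (@mxnorm_l1_diff_le_partials R k q 1 _ e f m (@block_inj) (fun i w => submxrow w i)).
- exact: block_inj_linear.
- exact: sum_block_inj_submxrow.
- exact: df.
by move=> i; have := le_C i; under eq_fun do rewrite mxrow_dfwithE.
Qed.

End Blocks.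

Lemma EFC_add_w_out_w_in (R : realType) (S : finType) (w : S -> S -> R) u s :
  EFC w u s + w_out w u + w_in w s - 4 = 3 * w_T w u s + 2 * w_F w u s.
Proof. by rewrite /EFC; ring. Qed.

Section InfluenceMatrix.
Variables (R : realType) (S : finType) (k : nat) (n : 'I_k -> nat)
  (A : forall i : 'I_k, {ffun 'I_(n i) -> S} -> R).
Hypothesis n_ge2 : forall i, (2 <= n i)%N.
Hypothesis A_ge0 : forall i (z : {ffun 'I_(n i) -> S}), 0 <= A z.

Lemma first_isE i (z : {ffun 'I_(n i) -> S}) s (a : 'I_(n i)) :
  first_is z s -> a = 0%N :> nat -> z a = s.
Proof. by move=> /forallP /(_ a) /implyP z0s a0; apply/eqP/z0s; rewrite a0. Qed.

Lemma sum_first_is_at s i (j : 'I_(n i)) (g : S -> R) :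
  \sum_u \sum_(z : {ffun 'I_(n i) -> S} | first_is z s && (z j == u)) A z * g u
  = \sum_(z : {ffun 'I_(n i) -> S} | first_is z s) A z * g (z j).
Proof.
rewrite [RHS](partition_big (fun z : {ffun 'I_(n i) -> S} => z j) predT) //=.
by apply: eq_bigr => u _; apply: eq_bigr => z /andP[_ /eqP ->].
Qed.

Lemma sum_Atilde_mulr s (c : S -> R) :
  \sum_u Atilde A s u * c u =
  \sum_i \sum_(z : {ffun 'I_(n i) -> S} | first_is z s)
    A z * \sum_(j < n i | (0 < j)%N) c (z j).
Proof.
rewrite /Atilde; under eq_bigr do rewrite mulr_suml.
rewrite exchange_big /=; apply: eq_bigr => i _.
under eq_bigr do rewrite mulr_suml.
rewrite exchange_big /=.
under eq_bigr do (under eq_bigr do rewrite mulr_suml).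
under eq_bigr do rewrite sum_first_is_at.
rewrite exchange_big /=; apply: eq_bigr => z _.
by rewrite mulr_sumr.
Qed.

Lemma Atilde_ge0 s u : 0 <= Atilde A s u.
Proof. by do 3!(apply: sumr_ge0 => ? _). Qed.

Lemma Bmat_ge0 s u : 0 <= Bmat A s u.
Proof. by rewrite addr_ge0 ?Atilde_ge0 // mulr_ge0 // bigmax_ge_id. Qed.

Lemma weight_BmatE u s : weight (Bmat A) u s = Bmat A s u.
Proof. by rewrite /weight; case: ltrP => // B_le0; apply/eqP; rewrite eq_le B_le0 Bmat_ge0. Qed.

Lemma sum_first_is_le_gamma s :
  \sum_i \sum_(z : {ffun 'I_(n i) -> S} | first_is z s) A z <= gamma A.
Proof.
apply: le_trans (le_bigmax _ _ s).
have := sum_Atilde_mulr s (fun=> 1); under eq_bigr do rewrite mulr1; move=> ->.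
apply: ler_sum => i _; apply: ler_sum => z _.
rewrite ler_peMr // (bigD1 (Ordinal (n_ge2 i))) //=.
by rewrite lerDl sumr_ge0.
Qed.

(* The first argument of every tuple is [s] itself: it contributes through the
   gamma I part of B, the others through A~. *)
Lemma sum_first_is_args_le_Bmat s (c : S -> R) : (forall u, 0 <= c u) ->
  \sum_i \sum_(z : {ffun 'I_(n i) -> S} | first_is z s) A z * \sum_(a < n i) c (z a)
  <= \sum_u Bmat A s u * c u.
Proof.
move=> c_ge0.
have split_args i (z : {ffun 'I_(n i) -> S}) : first_is z s ->
    \sum_(a < n i) c (z a) = c s + \sum_(a < n i | (0 < a)%N) c (z a).
  move=> zs; have n_gt0 : (0 < n i)%N by apply: leq_trans (n_ge2 i).
  rewrite (bigD1 (Ordinal n_gt0)) //= (first_isE zs) //; congr (_ + _).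
  by apply: eq_bigl => a; rewrite -(inj_eq val_inj) /= lt0n.
have -> : \sum_u Bmat A s u * c u = gamma A * c s + \sum_u Atilde A s u * c u.
  rewrite /Bmat; under eq_bigr do rewrite mulrDl; rewrite big_split /=; congr (_ + _).
  rewrite (bigD1 s) //= eqxx mul1r big1 ?addr0 // => u /negbTE nsu.
  by rewrite eq_sym nsu !mul0r.
rewrite sum_Atilde_mulr.
under eq_bigr do (under eq_bigr => z zs do rewrite (split_args _ _ zs) mulrDr).
under eq_bigr do rewrite big_split /=.
rewrite big_split /= lerD2r.
under eq_bigr do rewrite -mulr_suml.
by rewrite -mulr_suml ler_wpM2r ?sum_first_is_le_gamma.
Qed.

End InfluenceMatrix.

Definition features_diff_le (R : realType) (S : finType) m d
    (H : 'rV[R]_m -> S -> 'rV[R]_d) (x : 'rV[R]_m) (c : S -> R) : Prop :=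
  forall s, differentiable (fun u => H u s) x /\
    forall v, mxnorm_l1 ('d (fun u => H u s) x v) <= c s * mxnorm_l1 v.

Lemma features_diff_le_update (R : realType) (S : finType) m (x : S -> 'rV[R]_m) tau :
  features_diff_le (fun u r => if r == tau then u else x r) (x tau)
    (fun s => (s == tau)%:R).
Proof.
move=> s /=; case: (eqVneq s tau) => _ /=.
  have [did didE] := linear_mx_diff (x tau) (fun (a : R) (u v : 'rV[R]_m) => erefl (a *: u + v)).
  by split => // v; rewrite didE mul1r.
split=> [|v]; first exact: differentiable_cst.
rewrite (diff_cst (x s) (x tau)) mul0r /mxnorm_l1.
by rewrite big1 // => i _; rewrite big1 // => j _; rewrite mxE normr0.
Qed.

Section MessagePassing.
Variables (R : realType) (S : finType) (k : nat) (n : 'I_k -> nat)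
  (A : forall i : 'I_k, {ffun 'I_(n i) -> S} -> R)
  (p : nat -> nat) (q : nat -> 'I_k -> nat)
  (psi : forall (t : nat) (i : 'I_k), 'M[R]_(n i, p t) -> 'rV[R]_(q t i))
  (phi : forall t : nat, 'rV[R]_(\sum_(i < k) q t i) -> 'rV[R]_(p t.+1))
  (alpha : nat -> R) (beta_ : nat -> 'I_k -> R).
Hypothesis n_ge2 : forall i, (2 <= n i)%N.
Hypothesis A_ge0 : forall i (z : {ffun 'I_(n i) -> S}), 0 <= A z.
Hypothesis psi_diff : forall t i (X : 'M[R]_(n i, p t)), differentiable (@psi t i) X.
Hypothesis psi_partial_le : forall t i (X : 'M[R]_(n i, p t)) (j : 'I_(n i)),
  norm1 (jac (fun u : 'rV[R]_(p t) =>
    @psi t i (\matrix_(a, b) if a == j then u 0 b else X a b)) (row j X)) <= beta_ t i.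
Hypothesis phi_diff : forall t (m : 'rV[R]_(\sum_(i < k) q t i)), differentiable (@phi t) m.
Hypothesis phi_partial_le : forall t (m : 'rV[R]_(\sum_(i < k) q t i)) (i : 'I_k),
  norm1 (jac (fun u : 'rV[R]_(q t i) =>
    @phi t (\mxrow_(j < k) @dfwith _ (fun j0 : 'I_k => 'rV[R]_(q t j0))
                              (fun j0 => submxrow m j0) i u j))
    (submxrow m i)) <= alpha t.

Local Notation beta t := (\big[Num.max/0]_(i < k) beta_ t i).

Lemma beta_ge0 t i : 0 <= beta_ t i.
Proof.
have n_gt0 : (0 < n i)%N by apply: leq_trans (n_ge2 i).
exact: le_trans (norm1_ge0 _) (psi_partial_le 0 (Ordinal n_gt0)).
Qed.

Lemma alpha_ge0 t (i : 'I_k) : 0 <= alpha t.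
Proof. exact: le_trans (norm1_ge0 _) (phi_partial_le 0 i). Qed.

(* With no relations ([k = 0]) nothing constrains [alpha t], but [beta t = 0]. *)
Lemma alpha_beta_ge0 t : 0 <= alpha t * beta t.
Proof.
have [i _|no_rel] := pickP (@predT 'I_k).
  by rewrite mulr_ge0 ?(alpha_ge0 t i) // bigmax_ge_id.
by rewrite big_pred0 ?mulr0 // => i; exact: no_rel i.
Qed.

Lemma args_sum_delta d i (h : S -> 'rV[R]_d) (z : {ffun 'I_(n i) -> S}) :
  args h z = \sum_a delta_mx a 0 *m h (z a).
Proof.
by apply/row_matrixP => a; rewrite row_sum_delta_mul; apply/rowP => b; rewrite !mxE.
Qed.

Lemma diff_args m d i (H : 'rV[R]_m -> S -> 'rV[R]_d) x (z : {ffun 'I_(n i) -> S}) :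
  (forall s, differentiable (fun u => H u s) x) ->
  differentiable (fun u => args (H u) z) x /\
  forall v a, row a ('d (fun u => args (H u) z) x v) = 'd (fun u => H u (z a)) x v.
Proof.
move=> dH.
have -> : (fun u => args (H u) z)
        = fun u => \sum_a (mulmx (delta_mx a 0) \o (fun u => H u (z a))) u.
  by apply: funext => u; rewrite args_sum_delta.
have dterm a := @diff_linear_comp R _ _ _ _ (mulmx (delta_mx a 0 : 'M[R]_(n i, 1))) _
  (fun u => H u (z a)) x (mulmx_linear _) (dH (z a)).
have [dsum dsumE] := @diff_big R _ _ _ (index_enum 'I_(n i)) predT
  (fun a => mulmx (delta_mx a 0) \o (fun u => H u (z a))) x (fun a _ => (dterm a).1).
split=> // v a; rewrite dsumE.
under eq_bigr do rewrite (dterm _).2.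
exact: row_sum_delta_mul.
Qed.

Lemma diff_message t m (H : 'rV[R]_m -> S -> 'rV[R]_(p t)) x s i (c : S -> R) :
  features_diff_le H x c ->
  differentiable (fun u => message A psi (H u) s i) x /\
  forall v, mxnorm_l1 ('d (fun u => message A psi (H u) s i) x v) <=
    beta_ t i * (\sum_(z | first_is z s) A z * \sum_(a < n i) c (z a)) * mxnorm_l1 v.
Proof.
move=> dH.
have dterm (z : {ffun 'I_(n i) -> S}) :
    differentiable (@psi t i \o (fun u => args (H u) z)) x /\
    forall v, mxnorm_l1 ('d (@psi t i \o (fun u => args (H u) z)) x v)
      <= beta_ t i * (\sum_(a < n i) c (z a)) * mxnorm_l1 v.
  have [dargs dargsE] := diff_args z (fun s => (dH s).1).
  split=> [|v]; first exact: differentiable_comp dargs (psi_diff _).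
  rewrite diff_comp //=.
  apply: le_trans (mxnorm_l1_diff_le_rows (psi_diff _) (psi_partial_le _) _) _.
  rewrite mxnorm_l1_rows -mulrA ler_wpM2l ?beta_ge0 // mulr_suml ler_sum // => a _.
  by rewrite dargsE (dH _).2.
have dscaled (z : {ffun 'I_(n i) -> S}) :=
  diff_linear_comp (@scalemx_linear R _ _ (A z)) (dterm z).1.
have [dsum dsumE] := @diff_big R _ _ _ (index_enum {ffun 'I_(n i) -> S})
  (fun z => first_is z s) (fun z => (fun M => A z *: M) \o (@psi t i \o (fun u => args (H u) z))) x
  (fun z _ => (dscaled z).1).
split=> // v; rewrite dsumE.
apply: le_trans (mxnorm_l1_sum _ _ _) _.
rewrite mulr_sumr mulr_suml ler_sum // => z _.
rewrite (dscaled z).2 mxnorm_l1Z ger0_norm // mulrCA -!mulrA ler_wpM2l //.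
by rewrite mulrA; exact: (dterm z).2.
Qed.

Lemma features_diff_le_layer t m (H : 'rV[R]_m -> S -> 'rV[R]_(p t)) x (c : S -> R) :
  (forall s, 0 <= c s) -> features_diff_le H x c ->
  features_diff_le (fun u s => @phi t (\mxrow_i message A psi (H u) s i)) x
    (fun s => alpha t * beta t * \sum_u Bmat A s u * c u).
Proof.
move=> c_ge0 dH s /=.
have dmsg i := diff_message s i dH.
have dblk i := diff_linear_comp (@block_inj_linear R k (q t) i) (dmsg i).1.
have [dsum dsumE] := @diff_big R _ _ _ (index_enum 'I_k) predT
  (fun i u => @block_inj R k (q t) i (message A psi (H u) s i)) x
  (fun i _ => (dblk i).1).
have -> : (fun u => @phi t (\mxrow_i message A psi (H u) s i))
    = @phi t \o (fun u => \sum_i @block_inj R k (q t) i (message A psi (H u) s i)).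
  apply: funext => u /=; congr (@phi t).
  by rewrite -[LHS]sum_block_inj_submxrow; apply: eq_bigr => i _; rewrite mxrowK.
split=> [|v]; first exact: differentiable_comp dsum (phi_diff _).
rewrite diff_comp //=.
apply: le_trans (mxnorm_l1_diff_le_blocks (phi_diff _) (phi_partial_le _) _) _.
have blockE i : submxrow ('d (fun u => \sum_j @block_inj R k (q t) j
      (message A psi (H u) s j)) x v) i
    = 'd (fun u => message A psi (H u) s i) x v.
  by rewrite dsumE (eq_bigr _ (fun j _ => (dblk j).2 v)) submxrow_sum_block_inj.
rewrite (eq_bigr _ (fun i _ => congr1 (@mxnorm_l1 R _ _) (blockE i))).
pose y i := \sum_(z : {ffun 'I_(n i) -> S} | first_is z s) A z * \sum_(a < n i) c (z a).
have y_ge0 i : 0 <= y i.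
  by apply: sumr_ge0 => z _; rewrite mulr_ge0 ?sumr_ge0.
apply: (@le_trans _ _ (\sum_i alpha t * beta t * y i * mxnorm_l1 v)).
  rewrite mulr_sumr ler_sum // => i _; rewrite -!mulrA ler_wpM2l ?(alpha_ge0 t i) //.
  apply: le_trans ((dmsg i).2 v) _.
  by rewrite -mulrA ler_wpM2r ?mulr_ge0 ?y_ge0 ?mxnorm_l1_ge0 // le_bigmax.
rewrite -mulr_suml -mulr_sumr ler_wpM2r ?mxnorm_l1_ge0 // ler_wpM2l ?alpha_beta_ge0 //.
exact: sum_first_is_args_le_Bmat.
Qed.

Lemma norm1_jac_feat2_le (sigma tau : S) (x : S -> 'rV[R]_(p 0)) :
  norm1 (jac (fun u : 'rV[R]_(p 0) =>
      feat A psi phi 2 (fun r => if r == tau then u else x r) sigma) (x tau))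
  <= alpha 0 * beta 0 * (alpha 1 * beta 1) * w_T (weight (Bmat A)) tau sigma.
Proof.
pose c0 (s : S) : R := (s == tau)%:R.
pose c1 s := alpha 0 * beta 0 * \sum_u Bmat A s u * c0 u.
have c1_ge0 s : 0 <= c1 s by rewrite mulr_ge0 ?alpha_beta_ge0 ?sumr_ge0 // => u _; rewrite mulr_ge0 ?Bmat_ge0.
have layer1 := features_diff_le_layer (fun s => ler0n _ _) (features_diff_le_update x tau).
have [_ feat2_le] := features_diff_le_layer c1_ge0 layer1 sigma.
apply: le_trans (norm1_jac_le _ feat2_le) _.
  by rewrite mulr_ge0 ?alpha_beta_ge0 ?sumr_ge0 // => u _; rewrite mulr_ge0 ?Bmat_ge0.
have c1E u : c1 u = alpha 0 * beta 0 * Bmat A u tau.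
  rewrite /c1 (bigD1 tau) //= /c0 eqxx mulr1 big1 ?addr0 // => r /negbTE ->.
  by rewrite mulr0.
suff -> : alpha 1 * beta 1 * \sum_u Bmat A sigma u * c1 u
    = alpha 0 * beta 0 * (alpha 1 * beta 1) * w_T (weight (Bmat A)) tau sigma by [].
rewrite /w_T !mulr_sumr; apply: eq_bigr => u _.
by rewrite c1E !(weight_BmatE A_ge0); ring.
Qed.

End MessagePassing.

Theorem proposition1 (R : realType) (S : finType) (k : nat) (n : 'I_k -> nat)
  (Rel : forall i : 'I_k, {set {ffun 'I_(n i) -> S}})
  (A : forall i : 'I_k, {ffun 'I_(n i) -> S} -> R)
  (p : nat -> nat) (q : nat -> 'I_k -> nat)
  (psi : forall (t : nat) (i : 'I_k), 'M[R]_(n i, p t) -> 'rV[R]_(q t i))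
  (phi : forall t : nat, 'rV[R]_(\sum_(i < k) q t i) -> 'rV[R]_(p t.+1))
  (alpha : nat -> R) (beta_ : nat -> 'I_k -> R) :
  (forall i, (2 <= n i)%N) ->
  (forall i z, 0 <= A i z) ->
  (forall i z, z \notin Rel i -> A i z = 0) ->
  (* bounded Jacobians: message functions *)
  (forall t i (X : 'M[R]_(n i, p t)), differentiable (psi t i) X) ->
  (forall t i (X : 'M[R]_(n i, p t)) (j : 'I_(n i)),
     norm1 (jac (fun u : 'rV[R]_(p t) =>
                   psi t i (\matrix_(a, b) if a == j then u 0 b else X a b))
                (row j X)) <= beta_ t i) ->
  (* bounded Jacobians: update functions *)
  (forall t (m : 'rV[R]_(\sum_(i < k) q t i)), differentiable (phi t) m) ->
  (forall t (m : 'rV[R]_(\sum_(i < k) q t i)) (i : 'I_k),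
     norm1 (jac (fun u : 'rV[R]_(q t i) =>
                   phi t (\mxrow_(j < k) @dfwith _ (fun j0 : 'I_k => 'rV[R]_(q t j0)) (fun j0 => submxrow m j0) i u j))
                (submxrow m i)) <= alpha t) ->
  let beta := fun l => \big[Num.max/0]_(i < k) beta_ l i in
  let w := weight (Bmat A) in
  forall (sigma tau : S), is_edge (Bmat A) tau sigma ->
  forall x : S -> 'rV[R]_(p 0),
    norm1 (jac (fun u : 'rV[R]_(p 0) =>
                  feat A psi phi 2 (fun r => if r == tau then u else x r) sigma)
               (x tau))
    <= 1 / 3 * (\prod_(l < 2) (alpha l * beta l))
         * (EFC w tau sigma + w_out w tau + w_in w sigma - 4).
Proof.
move=> n_ge2 A_ge0 _ psi_diff psi_le phi_diff phi_le beta w sigma tau _ x.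
apply: le_trans (norm1_jac_feat2_le n_ge2 A_ge0 psi_diff psi_le phi_diff phi_le sigma tau x) _.
have third_le (K T F : R) : 0 <= K -> 0 <= F -> K * T <= 1 / 3 * K * (3 * T + 2 * F).
  move=> K_ge0 F_ge0; have -> : 1 / 3 * K * (3 * T + 2 * F) = K * T + 2 / 3 * (K * F) by field.
  by rewrite lerDl !mulr_ge0.
have prodE : \prod_(l < 2) (alpha l * beta l) = alpha 0 * beta 0 * (alpha 1 * beta 1).
  by rewrite !big_ord_recr big_ord0 /= mul1r.
rewrite EFC_add_w_out_w_in prodE.
apply: third_le; first exact: mulr_ge0 (alpha_beta_ge0 _ phi_le 0) (alpha_beta_ge0 _ phi_le 1).
rewrite /w; do 2!(apply: sumr_ge0 => ? _).
by rewrite !(weight_BmatE A_ge0) !mulr_ge0 ?(Bmat_ge0 A_ge0).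
Qed.
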